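(* Let $n$ be a positive integer and $G$ a graph. If $G\in\operatorname{obs}(P_n)$, then $G$ is a cycle, or $G$ is a linear forest (a disjoint union of paths), or $G$ is isomorphic to one of the graphs $A$, $B$, $E$.
   Context: All graphs are finite, simple and loopless. $P_n$ denotes the path on $n$ vertices ($P_1=K_1$, $P_2=K_2$). A full-homomorphism $\varphi\colon G\to H$ is a map $V(G)\to V(H)$ such that for all $x,y\in V(G)$, $xy\in E(G)$ if and only if $\varphi(x)\varphi(y)\in E(H)$. A full $H$-colouring of $G$ is a full-homomorphism $G\to H$. A minimal $H$-obstruction is a graph $G$ that admits no full $H$-colouring while every proper induced subgraph of $G$ admits one; $\operatorname{obs}(H)$ denotes the set of minimal $H$-obstructions (up to isomorphism). The graphs $A$, $B$, $E$ have vertex set $\{v_0,\dots,v_5\}$ and edge sets: $E(A)=\{v_0v_1,v_1v_2,v_2v_3,v_3v_4,v_4v_5,v_1v_4\}$; $E(B)=E(A)\cup\{v_0v_5\}$; $E(E)=\{v_0v_1,v_1v_2,v_0v_5,v_1v_4,v_2v_3\}$. *)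

From mathcomp Require Import all_boot.
Set Implicit Arguments. Unset Strict Implicit. Unset Printing Implicit Defensive.

Definition simple_graph (T : finType) (e : rel T) : Prop :=
  symmetric e /\ irreflexive e.

Definition path_adj (n : nat) (i j : 'I_n) : bool :=
  (i.+1 == j :> nat) || (j.+1 == i :> nat).

Definition full_Pn_colouring (T : finType) (e : rel T) (n : nat)
  (f : T -> 'I_n) : Prop :=
  forall x y : T, e x y = path_adj (f x) (f y).

Definition induced_full_Pn_colourable (T : finType) (e : rel T) (n : nat)
  (S : {set T}) : Prop :=
  exists f : T -> 'I_n, forall x y : T, x \in S -> y \in S ->
    e x y = path_adj (f x) (f y).

Definition minimal_Pn_obstruction (T : finType) (e : rel T) (n : nat) : Prop :=
  (~ exists f : T -> 'I_n, @full_Pn_colouring T e n f) /\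
  (forall S : {set T}, S \proper [set: T] -> @induced_full_Pn_colourable T e n S).

Definition is_cycle (T : finType) (e : rel T) : Prop :=
  exists k : nat, 3 <= k /\ exists g : 'I_k -> T, bijective g /\
    forall i j : 'I_k,
      e (g i) (g j) = (i.+1 %% k == j :> nat) || (j.+1 %% k == i :> nat).

(* G is a linear forest: isomorphic to the disjoint union of paths
   P_{l_0} + ... + P_{l_{m-1}} (all l_i >= 1), whose vertices are the pairs
   (c, p) with c < m and p < l_c, adjacent iff same c and positions differ by 1. *)
Definition is_linear_forest (T : finType) (e : rel T) : Prop :=
  exists (ls : seq nat) (f : T -> nat * nat),
    all (fun l => 0 < l) ls /\
    injective f /\
    (forall x, (f x).1 < size ls /\ (f x).2 < nth 0 ls (f x).1) /\
    (forall c p, c < size ls -> p < nth 0 ls c -> exists x, f x = (c, p)) /\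
    (forall x y, e x y =
       ((f x).1 == (f y).1) &&
       (((f x).2.+1 == (f y).2) || ((f y).2.+1 == (f x).2))).

Definition edges_A : seq (nat * nat) :=
  [:: (0,1); (1,2); (2,3); (3,4); (4,5); (1,4)].
Definition edges_B : seq (nat * nat) := (0,5) :: edges_A.
Definition edges_E : seq (nat * nat) :=
  [:: (0,1); (1,2); (0,5); (1,4); (2,3)].

Definition adj_of (es : seq (nat * nat)) (i j : 'I_6) : bool :=
  ((nat_of_ord i, nat_of_ord j) \in es) || ((nat_of_ord j, nat_of_ord i) \in es).

Definition graph_A := adj_of edges_A.
Definition graph_B := adj_of edges_B.
Definition graph_E := adj_of edges_E.

Definition iso6 (T : finType) (e : rel T) (h : rel 'I_6) : Prop :=
  exists phi : T -> 'I_6, bijective phi /\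
    forall x y : T, e x y = h (phi x) (phi y).

From mathcomp Require Import all_boot zify.
Set Implicit Arguments. Unset Strict Implicit. Unset Printing Implicit Defensive.

(* A minimal P_n-obstruction G has no twins (a twin could take the colour of its partner), and
   every non-colourable induced subgraph of G, such as an odd cycle, is all of G.

   In a full P_n-colouring two of any three neighbours of a vertex get the same colour, so they
   have the same neighbours in the coloured subgraph.  Hence, if v has three neighbours a, b, c
   (independent, as a triangle would be all of G), two vertices x, y separating them pairwise give
   a non-colourable induced subgraph on {v, a, b, c, x, y}, which is G.  Checking the 2^9 possible
   adjacencies of x and y shows that G is A, B or E.

   Otherwise G has maximum degree 2.  If every induced subgraph has a vertex of degree at most 1,
   G is a linear forest.  If some vertex set U induces minimum degree 2, then no edge leaves U and
   the two neighbours of a vertex of maximal colour in U are twins, so U cannot be coloured: U is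
   all of G, which is then 2-regular, and deleting any vertex leaves a single path. *)

Lemma path_adj_irr n (i : 'I_n) : path_adj i i = false.
Proof. by rewrite /path_adj; apply/negbTE; lia. Qed.

Lemma path_adj_odd n (i j : 'I_n) : path_adj i j -> odd j = ~~ odd i.
Proof. by case/orP=> /eqP <- /=; rewrite ?negbK. Qed.

Lemma path_adj_three n (i a b c : 'I_n) :
  path_adj i a -> path_adj i b -> path_adj i c -> [|| a == b, a == c | b == c].
Proof. by rewrite /path_adj -!(inj_eq val_inj) /=; lia. Qed.

Section InducedColourings.
Variables (T : finType) (e : rel T) (n : nat) (S : {set T}).

Lemma colour_parity_along_path (f : T -> 'I_n) :
    (forall x y, x \in S -> y \in S -> e x y = path_adj (f x) (f y)) ->
  forall x p, all (mem S) (x :: p) -> path e x p ->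
  odd (f (last x p)) = odd (f x) (+) odd (size p).
Proof.
move=> Hf x p; elim: p x => [|y p IHp] x /=; first by rewrite addbF.
case/and3P=> xS yS pS /andP[exy yp].
have fxy : odd (f y) = ~~ odd (f x) by apply: path_adj_odd; rewrite -Hf.
by rewrite IHp /= ?yS // fxy addNb addbN.
Qed.

Lemma odd_cycle_not_colourable (s : seq T) :
  all (mem S) s -> cycle e s -> odd (size s) -> ~ induced_full_Pn_colourable e n S.
Proof.
case: s => [|x p] //= sS cyc odd_p [f Hf].
have xpS : all (mem S) (x :: rcons p x).
  by case/andP: sS => xS pS; rewrite /= all_rcons; apply/and3P.
have := colour_parity_along_path Hf xpS cyc.
by rewrite last_rcons size_rcons /= odd_p addbT; case: (odd _).
Qed.

Definition distinguished_in (x y : T) := exists2 w, w \in S & e x w != e y w.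

Lemma claw_not_colourable v a b c :
  v \in S -> a \in S -> b \in S -> c \in S -> e v a -> e v b -> e v c ->
  distinguished_in a b -> distinguished_in a c -> distinguished_in b c ->
  ~ induced_full_Pn_colourable e n S.
Proof.
move=> vS aS bS cS va vb vc dab dac dbc [f Hf].
have same_colour x y : x \in S -> y \in S -> distinguished_in x y -> f x != f y.
  by move=> xS yS [w wS]; apply: contra => /eqP fxy; rewrite !Hf // fxy.
rewrite !Hf // in va vb vc.
by case/or3P: (path_adj_three va vb vc); apply/negP; apply: same_colour.
Qed.

End InducedColourings.

Definition nat_adj (es : seq (nat * nat)) (i j : nat) : bool :=
  ((i, j) \in es) || ((j, i) \in es).

Definition claw_edges : seq (nat * nat) := [:: (0, 1); (0, 2); (0, 3)].
Definition free_pairs : seq (nat * nat) :=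
  [:: (0, 4); (0, 5); (1, 4); (1, 5); (2, 4); (2, 5); (3, 4); (3, 5); (4, 5)].

(* The table of values on [0, 6), so that the virtual machine computes each of them once. *)
Definition tabulate6 (r : nat -> nat -> bool) : nat -> nat -> bool :=
  let rows := [seq [seq r i j | j <- iota 0 6] | i <- iota 0 6] in
  fun i j => nth false (nth [::] rows i) j.

Lemma tabulate6E r i j : i < 6 -> j < 6 -> tabulate6 r i j = r i j.
Proof.
by move=> i6 j6; rewrite /tabulate6 (nth_map 0) ?size_iota // (nth_map 0) ?size_iota // !nth_iota.
Qed.

(* Vertices [0, ..., 5] stand for [v, a, b, c, x, y]: [v] is joined to the independent vertices
   [a, b, c], and [bs] lists the remaining adjacencies along [free_pairs]. *)
Definition claw_config (bs : seq bool) (i j : nat) : bool :=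
  [|| nat_adj claw_edges i j, nth false bs (index (i, j) free_pairs)
    | nth false bs (index (j, i) free_pairs)].

Definition claw_split (r : nat -> nat -> bool) : bool :=
  [&& r 1 4 != r 2 4, (r 1 4 != r 3 4) || (r 1 5 != r 3 5)
    & (r 2 4 != r 3 4) || (r 2 5 != r 3 5)].

Definition twin_free6 (r : nat -> nat -> bool) : bool :=
  all (fun i => all (fun j => (i == j) || has (fun k => r i k != r j k) (iota 0 6))
    (iota 0 6)) (iota 0 6).

Definition perms6 := permutations (iota 0 6).

Definition short_odd_cycle (r : nat -> nat -> bool) : bool :=
  has (fun p => cycle r (take 3 p) || cycle r (take 5 p)) perms6.

Definition isomorphic6 (r g : nat -> nat -> bool) : bool :=
  has (fun p => all (fun i => all (fun j => r i j == g (nth 0 p i) (nth 0 p j))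
    (iota 0 6)) (iota 0 6)) perms6.

(* [if] rather than [||]: the virtual machine evaluates both arguments of [orb]. *)
Definition claw_outcome (r : nat -> nat -> bool) : bool :=
  twin_free6 r && if short_odd_cycle r then true else
    [|| isomorphic6 r (tabulate6 (nat_adj edges_A)), isomorphic6 r (tabulate6 (nat_adj edges_B))
      | isomorphic6 r (tabulate6 (nat_adj edges_E))].

Fixpoint bitseqs (k : nat) : seq (seq bool) :=
  if k is k'.+1 then [seq b :: s | b <- [:: true; false], s <- bitseqs k'] else [:: [::]].

Lemma bitseqsP (bs : seq bool) : bs \in bitseqs (size bs).
Proof.
elim: bs => [|b bs IH] //=; rewrite mem_cat cats0; apply/orP.
by case: b; [left | right]; apply/mapP; exists bs.
Qed.

Lemma claw_configurations (bs : seq bool) :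
  size bs = 9 -> claw_split (tabulate6 (claw_config bs)) ->
  claw_outcome (tabulate6 (claw_config bs)).
Proof.
move=> bs9 split_bs; have : bs \in [seq bs <- bitseqs 9 | claw_split (tabulate6 (claw_config bs))].
  by rewrite mem_filter split_bs -bs9 bitseqsP.
by move: {bs9 split_bs}bs; apply/allP; vm_compute.
Qed.

Lemma mem_iota6 i : (i \in iota 0 6) = (i < 6).
Proof. by rewrite mem_iota. Qed.

Lemma eq_tabulate6 (r r' : nat -> nat -> bool) :
  (forall i j, i < 6 -> j < 6 -> r i j = r' i j) -> tabulate6 r = tabulate6 r'.
Proof.
move=> rr'; rewrite /tabulate6.
have -> // : [seq [seq r i j | j <- iota 0 6] | i <- iota 0 6] =
             [seq [seq r' i j | j <- iota 0 6] | i <- iota 0 6].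
apply/eq_in_map => i; rewrite mem_iota6 => i6.
by apply/eq_in_map => j; rewrite mem_iota6 => j6; apply: rr'.
Qed.

Lemma perms6_nth p i : p \in perms6 -> i < 6 -> nth 0 p i < 6.
Proof.
rewrite mem_permutations => p_iota i6.
have := mem_nth 0 (_ : i < size p).
by rewrite (perm_size p_iota) size_iota (perm_mem p_iota) mem_iota6 => /(_ i6).
Qed.

Definition nth_adj (T : Type) (e : rel T) (x0 : T) (s : seq T) (i j : nat) : bool :=
  e (nth x0 s i) (nth x0 s j).

Lemma adj_ofE es i j : i < 6 -> j < 6 -> adj_of es (inord i) (inord j) = nat_adj es i j.
Proof. by move=> i6 j6; rewrite /adj_of !inordK. Qed.

Section SixVertexGraphs.
Variables (T : finType) (e : rel T) (x0 : T) (s : seq T).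
Hypothesis s6 : size s = 6.
Hypothesis s_spans : forall t, t \in s.

Lemma twin_free6_uniq : twin_free6 (tabulate6 (nth_adj e x0 s)) -> uniq s.
Proof.
rewrite /twin_free6 => /allP tf; apply/(uniqP x0) => i j; rewrite !inE s6 => i6 j6 sij.
have := allP (tf i _) j; rewrite !mem_iota6 i6 j6 => /(_ isT isT) /orP[/eqP //|].
case/hasP=> k; rewrite mem_iota6 => k6.
by rewrite !tabulate6E // /nth_adj sij eqxx.
Qed.

Lemma iso6_of_isomorphic6 es :
  uniq s -> isomorphic6 (tabulate6 (nth_adj e x0 s)) (tabulate6 (nat_adj es)) ->
  iso6 e (adj_of es).
Proof.
move=> s_uniq /hasP[p p6 /allP iso_p].
have p_iota := p6; rewrite mem_permutations in p_iota.
have p_size : size p = 6 by rewrite (perm_size p_iota) size_iota.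
have p_uniq : uniq p by rewrite (perm_uniq p_iota) iota_uniq.
have in_p k : (k \in p) = (k < 6) by rewrite (perm_mem p_iota) mem_iota6.
have index_s t : index t s < 6 by rewrite -s6 index_mem.
exists (fun t => inord (nth 0 p (index t s))); split.
  exists (fun k : 'I_6 => nth x0 s (index (k : nat) p)) => [t|k].
    by rewrite inordK ?perms6_nth // index_uniq ?p_size // nth_index.
  have kp : (k : nat) \in p by rewrite in_p.
  have kp6 : index (k : nat) p < size s by rewrite s6 -[X in _ < X]p_size index_mem.
  by apply: val_inj; rewrite /= index_uniq // nth_index // inordK.
move=> t u; rewrite -{1}(nth_index x0 (s_spans t)) -{1}(nth_index x0 (s_spans u)).
have := allP (iso_p (index t s) _) (index u s); rewrite !mem_iota6 !index_s.
move=> /(_ isT isT) /eqP; rewrite !tabulate6E ?index_s ?perms6_nth //.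
by rewrite adj_ofE ?perms6_nth.
Qed.

Lemma short_odd_cycle_lift :
  short_odd_cycle (tabulate6 (nth_adj e x0 s)) ->
  exists c : seq T, [/\ cycle e c, odd (size c) & size c < 6].
Proof.
rewrite /short_odd_cycle => /hasP[p p6 cyc_p].
rewrite mem_permutations in p6.
have take_lt6 k : all (fun i => i < 6) (take k p).
  by apply/allP => i /mem_take; rewrite (perm_mem p6) mem_iota6.
have p_size : size p = 6 by rewrite (perm_size p6) size_iota.
have lift k : k < 6 -> odd k -> cycle (tabulate6 (nth_adj e x0 s)) (take k p) ->
    exists c : seq T, [/\ cycle e c, odd (size c) & size c < 6].
  move=> k6 odd_k cyc; exists (map (nth x0 s) (take k p)).
  have size_take : size (take k p) = k by rewrite size_takel // p_size ltnW.
  rewrite size_map size_take cycle_map; split; [|exact: odd_k|exact: k6].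
  rewrite -(eq_in_cycle (e := tabulate6 (nth_adj e x0 s)) _ (take_lt6 k)) // => i j i6 j6.
  by rewrite /= tabulate6E.
by case/orP: cyc_p; apply: lift.
Qed.

End SixVertexGraphs.

Definition lf_adj (u w : nat * nat) : bool :=
  (u.1 == w.1) && ((u.2.+1 == w.2) || (w.2.+1 == u.2)).

Lemma lf_adjC u w : lf_adj u w = lf_adj w u.
Proof. by rewrite /lf_adj eq_sym orbC. Qed.

Section LinearForests.
Variables (T : finType) (e : rel T).
Hypothesis e_sym : symmetric e.
Hypothesis e_irr : irreflexive e.

Definition linear_forest_on (S : {set T}) (ls : seq nat) (f : T -> nat * nat) :=
  [/\ forall k, k < size ls -> 0 < nth 0 ls k,
      {in S &, injective f},
      forall x, x \in S -> (f x).1 < size ls /\ (f x).2 < nth 0 ls (f x).1,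
      forall c p, c < size ls -> p < nth 0 ls c -> exists2 x, x \in S & f x = (c, p)
    & {in S &, forall x y, e x y = lf_adj (f x) (f y)}].

Lemma linear_forest_on0 : linear_forest_on set0 [::] (fun=> (0, 0)).
Proof. by split=> // [x y|x|x y]; rewrite inE. Qed.

Lemma is_linear_forest_of ls f : linear_forest_on [set: T] ls f -> is_linear_forest e.
Proof.
case=> ls_pos f_inj f_bd f_onto f_adj; exists ls, f; split; [|split; [|split; [|split]]].
- by apply/(all_nthP 0) => k; apply: ls_pos.
- by move=> x y; apply: f_inj; rewrite inE.
- by move=> x; apply: f_bd; rewrite inE.
- by move=> c p c_lt p_lt; have [x _] := f_onto c p c_lt p_lt; exists x.
- by move=> x y; apply: f_adj; rewrite inE.
Qed.

Definition insert_label (f : T -> nat * nat) (z : T) (c q : nat) (t : T) : nat * nat :=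
  if t == z then (c, q) else if ((f t).1 == c) && (q == 0) then (c, (f t).2.+1) else f t.

Section Insertion.
Variables (S : {set T}) (ls : seq nat) (f : T -> nat * nat) (z : T) (c q : nat).
Hypothesis zS : z \notin S.
Hypothesis lf : linear_forest_on S ls f.
Hypothesis c_le : c <= size ls.
Hypothesis q_end : q = 0 \/ q = nth 0 ls c.
Hypothesis z_adj : {in S, forall t, e z t = lf_adj (c, q) (insert_label f z c q t)}.

Let g := insert_label f z c q.
Let ls' := set_nth 0 ls c (nth 0 ls c).+1.

Lemma insert_labelS t :
  t \in S -> g t = if ((f t).1 == c) && (q == 0) then (c, (f t).2.+1) else f t.
Proof. by move=> tS; rewrite /g /insert_label; case: eqP => // tz; move: zS; rewrite -tz tS. Qed.

Lemma insert_label_inj : {in z |: S &, injective g}.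
Proof.
case: lf => _ f_inj f_bd _ _.
have gz : g z = (c, q) by rewrite /g /insert_label eqxx.
have gS_neq t : t \in S -> g t != (c, q).
  move=> tS; rewrite insert_labelS //; have [b1 b2] := f_bd t tS.
  case Et : (f t) b1 b2 => [a b] /= b1 b2; apply/eqP.
  case: ifP => [/andP[_ /eqP q0] /pair_equal_spec[_ qb] | C /pair_equal_spec[ac bq]]; first lia.
  by subst a b; rewrite eqxx /= in C; case: q_end => Q; [rewrite Q in C | lia].
move=> x y /setU1P[->|xS] /setU1P[->|yS] //.
- by rewrite gz => E; move: (gS_neq y yS); rewrite -E eqxx.
- by rewrite gz => E; move: (gS_neq x xS); rewrite E eqxx.
rewrite !insert_labelS // => E; apply: f_inj => //; move: E.
case Ex : (f x) => [a1 b1]; case Ey : (f y) => [a2 b2] /=.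
by case: ifP => C1; case: ifP => C2 /pair_equal_spec[E1 E2]; congr pair; lia.
Qed.

Lemma nth_insert_lengths k : nth 0 ls' k = if k == c then (nth 0 ls c).+1 else nth 0 ls k.
Proof. by rewrite nth_set_nth. Qed.

Lemma size_insert_lengths : size ls' = maxn c.+1 (size ls).
Proof. by rewrite size_set_nth. Qed.

Lemma insert_label_bounds x :
  x \in z |: S -> (g x).1 < size ls' /\ (g x).2 < nth 0 ls' (g x).1.
Proof.
case: lf => _ _ f_bd _ _; rewrite size_insert_lengths !nth_insert_lengths.
case/setU1P=> [->|xS].
  by rewrite /g /insert_label eqxx /= eqxx; split; [lia | case: q_end => Q; lia].
rewrite insert_labelS //; have [b1 b2] := f_bd x xS.
case Ex : (f x) b1 b2 => [a b] /= b1 b2.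
case: (eqVneq a c) => [Eac|Nac]; last by rewrite /= (negbTE Nac); split; lia.
by subst a; case: ifP => _ /=; rewrite eqxx; split; lia.
Qed.

Lemma insert_label_onto p' c' : c' < size ls' -> p' < nth 0 ls' c' ->
  exists2 x, x \in z |: S & g x = (c', p').
Proof.
case: lf => ls_pos _ _ f_onto _; rewrite size_insert_lengths nth_insert_lengths.
have in_zS x : x \in S -> x \in z |: S by move=> xS; apply/setU1P; right.
have c_lt : 0 < nth 0 ls c -> c < size ls.
  by move=> l_pos; rewrite ltnNge; apply: contraTN l_pos => c_ge; rewrite nth_default.
case: eqP => [->|/eqP Nc] c'_lt p'_lt; last first.
  have [x xS Ex] := f_onto c' p' ltac:(lia) p'_lt.
  by exists x; rewrite ?in_zS // insert_labelS // Ex /= (negbTE Nc).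
case: (eqVneq p' q) => [->|Npq].
  by exists z; rewrite ?setU11 // /g /insert_label eqxx.
case: q_end => Q.
  have [x xS Ex] := f_onto c p'.-1 (c_lt ltac:(lia)) ltac:(lia).
  by exists x; rewrite ?in_zS // insert_labelS // Ex /= eqxx Q /=; congr pair; lia.
have [x xS Ex] := f_onto c p' (c_lt ltac:(lia)) ltac:(lia).
by exists x; rewrite ?in_zS // insert_labelS // Ex /= eqxx /=; case: eqP => // q0; lia.
Qed.

Lemma insert_label_adj : {in z |: S &, forall x y, e x y = lf_adj (g x) (g y)}.
Proof.
case: lf => _ _ _ _ f_adj.
have gz : g z = (c, q) by rewrite /g /insert_label eqxx.
move=> x y /setU1P[->|xS] /setU1P[->|yS].
- by rewrite e_irr gz /lf_adj /= eqxx /=; apply/esym/negbTE; lia.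
- by rewrite z_adj // gz.
- by rewrite e_sym z_adj // gz lf_adjC.
rewrite f_adj // !insert_labelS // /lf_adj.
case Ex : (f x) => [a1 b1]; case Ey : (f y) => [a2 b2] /=.
by case: ifP => C1; case: ifP => C2 /=; lia.
Qed.

Lemma linear_forest_on_insert : linear_forest_on (z |: S) ls' g.
Proof.
case: (lf) => ls_pos _ _ _ _; split.
- move=> k; rewrite size_insert_lengths nth_insert_lengths.
  by case: eqP => [//|/eqP kc k_lt]; apply: ls_pos; lia.
- exact: insert_label_inj.
- exact: insert_label_bounds.
- by move=> c' p'; apply: insert_label_onto.
- exact: insert_label_adj.
Qed.

End Insertion.

Definition deg_le1_in (U : {set T}) (x : T) : bool :=
  [forall y in U, forall w in U, e x y ==> e x w ==> (y == w)].

Lemma deg_le1_inP (U : {set T}) x :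
  reflect (forall y w, y \in U -> w \in U -> e x y -> e x w -> y = w) (deg_le1_in U x).
Proof.
apply: (iffP forallP) => [H y w yU wU xy xw | H y].
  by move: (H y); rewrite yU /= => /forallP /(_ w); rewrite wU xy xw /= => /eqP.
apply/implyP => yU; apply/forallP => w; apply/implyP => wU.
by apply/implyP => xy; apply/implyP => xw; apply/eqP; apply: H.
Qed.

Lemma deg_le1_inPn (U : {set T}) x :
  ~~ deg_le1_in U x -> exists y w, [/\ y \in U, w \in U, y != w, e x y & e x w].
Proof.
case/forallPn=> y; rewrite negb_imply => /andP[yU /forallPn[w]].
rewrite !negb_imply => /and4P[wU xy xw yw].
by exists y, w.
Qed.

Definition one_degenerate (S : {set T}) : Prop :=
  forall U : {set T}, U \subset S -> U != set0 -> exists2 x, x \in U & deg_le1_in U x.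

Hypothesis max_deg2 : forall v a b c, e v a -> e v b -> e v c -> [|| a == b, a == c | b == c].

Lemma linear_forest_endpoint (S : {set T}) ls f u z :
  linear_forest_on S ls f -> u \in S -> z \notin S -> e u z ->
  (f u).2 = 0 \/ (f u).2.+1 = nth 0 ls (f u).1.
Proof.
case=> _ _ f_bd f_onto f_adj uS zS uz; have [u1 u2] := f_bd u uS.
case: (posnP (f u).2) => [|u_pos]; first by left.
case: (ltngtP (f u).2.+1 (nth 0 ls (f u).1)) => [u_in||]; [|lia|by right].
have [w1 w1S E1] := f_onto (f u).1 (f u).2.-1 u1 ltac:(lia).
have [w2 w2S E2] := f_onto (f u).1 (f u).2.+1 u1 u_in.
have uw1 : e u w1 by rewrite f_adj // E1 /lf_adj /=; lia.
have uw2 : e u w2 by rewrite f_adj // E2 /lf_adj /=; lia.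
have w12 : w1 != w2 by apply/eqP => E; move: E1; rewrite E E2 => /pair_equal_spec[_]; lia.
have /or3P[/eqP w12'|/eqP w1z|/eqP w2z] := max_deg2 uw1 uw2 uz.
- by rewrite w12' eqxx in w12.
- by rewrite -w1z w1S in zS.
- by rewrite -w2z w2S in zS.
Qed.

Lemma linear_forest_on_setU1 (S : {set T}) ls f z :
  linear_forest_on S ls f -> z \notin S -> deg_le1_in (z |: S) z ->
  exists ls' f', linear_forest_on (z |: S) ls' f'.
Proof.
move=> lf zS /deg_le1_inP z_deg; have [_ f_inj f_bd _ _] := lf.
have in_zS t : t \in S -> t \in z |: S by move=> tS; apply/setU1P; right.
have extend c q : c <= size ls -> q = 0 \/ q = nth 0 ls c ->
    {in S, forall t, e z t = lf_adj (c, q) (insert_label f z c q t)} ->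
    exists ls' f', linear_forest_on (z |: S) ls' f'.
  by move=> c_le q_end z_adj; exists (set_nth 0 ls c (nth 0 ls c).+1), (insert_label f z c q);
    apply: linear_forest_on_insert.
case: (boolP [exists u in S, e z u]) => [/existsP[u /andP[uS zu]] | /existsPn no_nbr]; last first.
  apply: (extend (size ls) 0) => //; first by left.
  move=> t tS; have [t1 _] := f_bd t tS; move: (no_nbr t); rewrite tS /= => /negbTE ->.
  have t_old : ((f t).1 == size ls) = false by lia.
  by rewrite (insert_labelS _ _ _ zS) //= t_old /lf_adj /= eq_sym t_old.
have nbrE t : t \in S -> e z t = (t == u).
  by move=> tS; apply/idP/eqP => [zt|->//]; apply: z_deg; rewrite ?in_zS.
have [u1 u2] := f_bd u uS.
have at_u t : t \in S -> (f t).1 = (f u).1 -> (f t).2 = (f u).2 -> t = u.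
  by move=> tS E1 E2; apply: f_inj => //; apply: injective_projections.
case: (linear_forest_endpoint lf uS zS _) => [|u_first|u_last]; first by rewrite e_sym.
- apply: (extend (f u).1 0); [lia | by left |] => t tS.
  rewrite nbrE // (insert_labelS _ _ _ zS) //= andbT /lf_adj.
  case: (eqVneq t u) => [->|tu]; first by rewrite eqxx /=; lia.
  case: ifP => [/eqP t1|t1] /=; last by rewrite eq_sym t1.
  by apply/esym/negbTE; apply: contra tu; rewrite eqxx /= => t0; apply/eqP/at_u => //; lia.
- apply: (extend (f u).1 (nth 0 ls (f u).1)); [lia | by right |] => t tS.
  rewrite nbrE // (insert_labelS _ _ _ zS) //= /lf_adj /=.
  have -> : (nth 0 ls (f u).1 == 0) = false by lia.
  rewrite andbF; case: (eqVneq t u) => [->|tu]; first by rewrite eqxx /=; lia.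
  have [t1 t2] := f_bd t tS.
  apply/esym/negbTE; apply: contra tu => /andP[/eqP E1 /orP[/eqP E2|/eqP E2]].
    by rewrite -E1 in t2; lia.
  by apply/eqP/at_u => //; lia.
Qed.

Lemma linear_forest_of_one_degenerate (S : {set T}) :
  one_degenerate S -> exists ls f, linear_forest_on S ls f.
Proof.
move: {2}#|S| (leqnn #|S|) => k; elim: k S => [|k IH] S S_card S_deg;
  (have [->|S0] := eqVneq S set0; first by exists [::], (fun=> (0, 0)); apply: linear_forest_on0).
  by move: S0; rewrite -card_gt0; lia.
have [z zS z_deg] := S_deg S (subxx S) S0.
have zS' : z \notin S :\ z by rewrite !inE eqxx.
have [ls [f lf]] : exists ls f, linear_forest_on (S :\ z) ls f.
  apply: IH; first by move: S_card; rewrite (cardsD1 z S) zS; lia.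
  by move=> U /subset_trans/(_ (subD1set S z)); apply: S_deg.
by rewrite -(setD1K zS) in z_deg *; apply: linear_forest_on_setU1 lf zS' z_deg.
Qed.

End LinearForests.

Lemma modn_le x k : x <= k -> x %% k = if x == k then 0 else x.
Proof. by case: eqP => [->|/eqP xk x_le]; [rewrite modnn | rewrite modn_small //; lia]. Qed.

Section TwoRegular.
Variables (T : finType) (e : rel T).
Hypothesis e_sym : symmetric e.
Hypothesis e_irr : irreflexive e.
Hypothesis max_deg2 : forall v a b c, e v a -> e v b -> e v c -> [|| a == b, a == c | b == c].
Hypothesis two_nbrs : forall t, exists y z, [/\ y != z, e t y & e t z].
Variables (w : T) (ls : seq nat) (f : T -> nat * nat).
Hypothesis lf : linear_forest_on e [set~ w] ls f.

Lemma path_end_adj t :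
  t \in [set~ w] -> ((f t).2 == 0) || ((f t).2.+1 == nth 0 ls (f t).1) -> e t w.
Proof.
case: lf => _ f_inj f_bd _ f_adj tS t_end.
have [y [z [yz ty tz]]] := two_nbrs t.
have [<-//|yw] := eqVneq y w; have [<-//|zw] := eqVneq z w.
have [yS zS] : y \in [set~ w] /\ z \in [set~ w] by rewrite !in_setC1.
have [_ y2] := f_bd y yS; have [_ z2] := f_bd z zS.
rewrite !f_adj // /lf_adj in ty tz.
case/andP: ty => /eqP ty1 ty2; case/andP: tz => /eqP tz1 tz2.
rewrite -ty1 in y2; rewrite -tz1 in z2.
by move: yz; rewrite (f_inj y z) ?eqxx //; apply: injective_projections; lia.
Qed.

Lemma exists_nbr_off_w t : exists2 y, y \in [set~ w] & e t y.
Proof.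
have [y [z [yz ty tz]]] := two_nbrs t.
have [yw|yw] := eqVneq y w; last by exists y; rewrite ?in_setC1.
by exists z; rewrite // in_setC1 -yw eq_sym.
Qed.

Lemma path_lengths_gt1 k : k < size ls -> 1 < nth 0 ls k.
Proof.
case: lf => ls_pos _ f_bd f_onto f_adj k_lt.
have [t tS ft] := f_onto k 0 k_lt (ls_pos k k_lt).
have [y yS ty] := exists_nbr_off_w t; have [_ y2] := f_bd y yS.
move: ty; rewrite f_adj // ft /lf_adj /= => /andP[/eqP k1 /orP[/eqP p1|//]].
by rewrite -k1 -p1 in y2.
Qed.

Lemma single_path : size ls = 1.
Proof.
case: lf => ls_pos _ f_bd f_onto _.
have [y yS wy] := exists_nbr_off_w w; have [y1 _] := f_bd y yS.
case: (ltnP 1 (size ls)) => [two|]; last by lia.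
have len0 := path_lengths_gt1 (ltnW two).
have [t0 t0S f0] := f_onto 0 0 (ltnW two) ltac:(lia).
have [t1 t1S f1] := f_onto 0 (nth 0 ls 0).-1 (ltnW two) ltac:(lia).
have [t2 t2S f2] := f_onto 1 0 two (ls_pos 1 two).
have w0 : e w t0 by rewrite e_sym; apply: path_end_adj; rewrite ?f0.
have w1 : e w t1 by rewrite e_sym; apply: path_end_adj; rewrite ?f1 //= orbC; apply/eqP; lia.
have w2 : e w t2 by rewrite e_sym; apply: path_end_adj; rewrite ?f2.
have /or3P[/eqP t01|/eqP t02|/eqP t12] := max_deg2 w0 w1 w2.
- by move: f1; rewrite -t01 f0 => /pair_equal_spec[_]; lia.
- by move: f2; rewrite -t02 f0 => /pair_equal_spec[].
- by move: f2; rewrite -t12 f1 => /pair_equal_spec[].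
Qed.

Lemma w_adjE t : t \in [set~ w] -> e w t = ((f t).2 == 0) || ((f t).2 == (nth 0 ls 0).-1).
Proof.
case: (lf) => _ _ f_bd f_onto f_adj tS; have [t1 t2] := f_bd t tS.
have {}t1 : (f t).1 = 0 by rewrite single_path in t1; lia.
rewrite t1 in t2; apply/idP/idP => [wt|t_end]; last first.
  by rewrite e_sym; apply: path_end_adj; rewrite // t1; lia.
apply/negPn/negP; rewrite negb_or => /andP[p0 p_last].
have [y yS fy] := f_onto 0 (f t).2.-1 ltac:(by rewrite single_path) ltac:(lia).
have [z zS fz] := f_onto 0 (f t).2.+1 ltac:(by rewrite single_path) ltac:(lia).
have ty : e t y by rewrite f_adj // fy /lf_adj /= t1; lia.
have tz : e t z by rewrite f_adj // fz /lf_adj /= t1; lia.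
have tw : e t w by rewrite e_sym.
have /or3P[/eqP yz|/eqP yw|/eqP zw] := max_deg2 ty tz tw.
- by move: fz; rewrite -yz fy => /pair_equal_spec[_]; lia.
- by rewrite yw in_setC1 eqxx in yS.
- by rewrite zw in_setC1 eqxx in zS.
Qed.

Lemma on_single_path t : t \in [set~ w] -> (f t).1 = 0 /\ (f t).2 < nth 0 ls 0.
Proof.
case: lf => _ _ f_bd _ _ tS; have [t1 t2] := f_bd t tS; rewrite single_path in t1.
have t10 : (f t).1 = 0 by lia.
by rewrite t10 in t2.
Qed.

Definition path_vertex (i : nat) : T := odflt w [pick t in [set~ w] | f t == (0, i)].

Lemma path_vertexP i :
  i < nth 0 ls 0 -> path_vertex i \in [set~ w] /\ f (path_vertex i) = (0, i).
Proof.
case: lf => _ _ _ f_onto _ i_lt; rewrite /path_vertex.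
case: pickP => [t /andP[tS /eqP ft]|none] //=.
have [t tS ft] := f_onto 0 i ltac:(by rewrite single_path) i_lt.
by move: (none t); rewrite tS ft eqxx.
Qed.

Definition cycle_vertex (i : 'I_(nth 0 ls 0).+1) : T :=
  if i == 0 :> nat then w else path_vertex i.-1.

Lemma cycle_vertex_bij : bijective cycle_vertex.
Proof.
case: lf => _ f_inj _ _ _; set l := nth 0 ls 0.
exists (fun t => if t == w then ord0 else inord ((f t).2.+1)) => [i|t].
  rewrite /cycle_vertex; case: (eqVneq (i : nat) 0) => [i0|i0].
    by rewrite eqxx; apply: val_inj; rewrite /= i0.
  have i_lt : (i : nat).-1 < l by have := ltn_ord i; lia.
  have [pS pf] := path_vertexP i_lt.
  rewrite in_setC1 in pS; rewrite (negbTE pS) pf /=.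
  by apply: val_inj; rewrite /= inordK; have := ltn_ord i; lia.
case: (eqVneq t w) => [->|tw]; first by rewrite /cycle_vertex /=.
have tS : t \in [set~ w] by rewrite in_setC1.
have [t1 t2] := on_single_path tS; have [pS pf] := path_vertexP t2.
rewrite /cycle_vertex /= inordK /=; last by lia.
by apply: f_inj => //; rewrite pf; apply: injective_projections.
Qed.

Lemma cycle_vertex_adj (i j : 'I_(nth 0 ls 0).+1) :
  e (cycle_vertex i) (cycle_vertex j) =
  (i.+1 %% (nth 0 ls 0).+1 == j) || (j.+1 %% (nth 0 ls 0).+1 == i).
Proof.
case: lf => _ _ _ _ f_adj.
have l_gt1 : 1 < nth 0 ls 0 by apply: path_lengths_gt1; rewrite single_path.
have i_lt := ltn_ord i; have j_lt := ltn_ord j.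
have onP (k : 'I_(nth 0 ls 0).+1) :
    (k : nat) != 0 -> path_vertex k.-1 \in [set~ w] /\ f (path_vertex k.-1) = (0, k.-1).
  by move=> k0; apply: path_vertexP; have := ltn_ord k; lia.
rewrite !modn_le // /cycle_vertex.
case: (eqVneq (i : nat) 0) => i0; case: (eqVneq (j : nat) 0) => j0 /=.
- by rewrite e_irr; case: ifP => ?; case: ifP => ?; lia.
- have [pS pf] := onP j j0.
  by rewrite w_adjE // pf /=; case: ifP => ?; case: ifP => ?; lia.
- have [pS pf] := onP i i0.
  by rewrite e_sym w_adjE // pf /=; case: ifP => ?; case: ifP => ?; lia.
- have [pS pf] := onP i i0; have [qS qf] := onP j j0.
  by rewrite f_adj // pf qf /lf_adj /=; case: ifP => ?; case: ifP => ?; lia.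
Qed.

Lemma is_cycle_of_path_and_vertex : is_cycle e.
Proof.
have l_gt1 : 1 < nth 0 ls 0 by apply: path_lengths_gt1; rewrite single_path.
exists (nth 0 ls 0).+1; split; first by lia.
by exists cycle_vertex; split; [exact: cycle_vertex_bij | exact: cycle_vertex_adj].
Qed.

End TwoRegular.

Section MinimalObstruction.
Variables (T : finType) (e : rel T) (n : nat).
Hypothesis e_sym : symmetric e.
Hypothesis e_irr : irreflexive e.
Hypothesis not_colourable : ~ exists f : T -> 'I_n, full_Pn_colouring e f.
Hypothesis proper_colourable :
  forall S : {set T}, S \proper [set: T] -> induced_full_Pn_colourable e n S.

Lemma not_colourable_setT (S : {set T}) :
  ~ induced_full_Pn_colourable e n S -> S = [set: T].
Proof.
by move=> S_not; apply/eqP/negPn/negP => S_proper; apply/S_not/proper_colourable; rewrite properT.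
Qed.

Lemma twin_free x y : x != y -> exists z, e x z != e y z.
Proof.
move=> xy; have [/existsP //|/existsPn twins] := boolP [exists z, e x z != e y z].
exfalso; apply: not_colourable.
have twinE z : e y z = e x z by move: (twins z); rewrite negbK => /eqP.
have [f Hf] : induced_full_Pn_colourable e n (setT :\ y).
  by apply: proper_colourable; rewrite properT; apply/eqP => /setP /(_ y); rewrite !inE eqxx.
have xS : x \in setT :\ y by rewrite !inE xy.
exists (fun z => if z == y then f x else f z) => a b.
case: eqP => [->|/eqP ay]; case: eqP => [->|/eqP by_].
- by rewrite e_irr path_adj_irr.
- by rewrite twinE Hf // !inE by_.
- by rewrite e_sym twinE e_sym Hf // !inE ay.
- by rewrite Hf // !inE ?ay ?by_.
Qed.

Lemma odd_cycle_spans (s : seq T) : cycle e s -> odd (size s) -> forall t, t \in s.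
Proof.
move=> cyc odd_s t.
have s_not : ~ induced_full_Pn_colourable e n [set t in s].
  by apply: odd_cycle_not_colourable cyc odd_s; apply/allP => x; rewrite /= inE.
by rewrite -[t \in s]in_set (not_colourable_setT s_not) inE.
Qed.

Lemma claw_independent v a b c :
  e v a -> e v b -> e v c -> a != c -> b != c -> ~~ e a b.
Proof.
move=> va vb vc ac bc; apply/negP => e_ab.
have /odd_cycle_spans/(_ isT c) : cycle e [:: v; a; b] by rewrite /= va e_ab e_sym vb.
rewrite !inE => /or3P[/eqP cv|/eqP ca|/eqP cb].
- by rewrite cv e_irr in vc.
- by rewrite ca eqxx in ac.
- by rewrite cb eqxx in bc.
Qed.

Lemma claw_outcome_iso6 (x0 : T) (s : seq T) :
  size s = 6 -> (forall t, t \in s) -> claw_outcome (tabulate6 (nth_adj e x0 s)) ->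
  iso6 e graph_A \/ iso6 e graph_B \/ iso6 e graph_E.
Proof.
move=> s6 s_spans /andP[/(twin_free6_uniq s6) s_uniq].
case: ifP => [/short_odd_cycle_lift [c [cyc odd_c c_lt6]] _ | _].
  have := uniq_leq_size s_uniq (fun t _ => odd_cycle_spans cyc odd_c t).
  by rewrite s6 leqNgt c_lt6.
by case/or3P=> /(iso6_of_isomorphic6 s6 s_spans s_uniq); auto.
Qed.

Lemma claw_extension v a b c :
  e v a -> e v b -> e v c -> a != b -> a != c -> b != c ->
  exists x y, let s := [:: v; a; b; c; x; y] in
    claw_split (tabulate6 (nth_adj e v s)) /\ forall t, t \in s.
Proof.
move=> va vb vc ab ac bc.
have [x xab] := twin_free ab; have [x' x'ac] := twin_free ac; have [x'' x''bc] := twin_free bc.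
pose y := if e a x == e c x then x' else x''.
have yac : (e a x != e c x) || (e a y != e c y).
  by rewrite /y; case: ifP => //= _; rewrite x'ac orbT.
have ybc : (e b x != e c x) || (e b y != e c y).
  rewrite /y; case: ifP => [/eqP <-|_]; last by rewrite x''bc orbT.
  by rewrite eq_sym xab.
exists x, y => s; split.
  by rewrite /claw_split !tabulate6E // /nth_adj /= xab yac ybc.
pose S : {set T} := [set t | t \in s].
have inS t : t \in s -> t \in S by move=> ts; rewrite /S in_set.
have dist_by w p q : w \in s -> e p w != e q w -> distinguished_in e S p q.
  by move=> ws pq; exists w; rewrite ?inS.
have S_not : ~ induced_full_Pn_colourable e n S.
  apply: (claw_not_colourable (v := v) (a := a) (b := b) (c := c));
    rewrite ?inS ?inE ?eqxx ?orbT //.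
  - by apply: (dist_by x); rewrite ?inE ?eqxx ?orbT.
  - by case/orP: yac; [apply: (dist_by x) | apply: (dist_by y)]; rewrite ?inE ?eqxx ?orbT.
  - by case/orP: ybc; [apply: (dist_by x) | apply: (dist_by y)]; rewrite ?inE ?eqxx ?orbT.
by move=> t; have := in_setT t; rewrite -(not_colourable_setT S_not) /S in_set.
Qed.

Lemma claw_config_nth_adj (x0 : T) (s : seq T) (r := nth_adj e x0 s) :
  r 0 1 -> r 0 2 -> r 0 3 -> ~~ r 1 2 -> ~~ r 1 3 -> ~~ r 2 3 ->
  tabulate6 (claw_config [seq r ij.1 ij.2 | ij <- free_pairs]) = tabulate6 r.
Proof.
move: @r => r r01 r02 r03 /negbTE r12 /negbTE r13 /negbTE r23.
have r_sym i j : r i j = r j i by rewrite /r /nth_adj e_sym.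
have r_irr i : r i i = false by rewrite /r /nth_adj e_irr.
apply: eq_tabulate6 => i j.
case: i => [|[|[|[|[|[|i]]]]]] // _; case: j => [|[|[|[|[|[|j]]]]]] // _;
  rewrite /claw_config /= ?orbF ?r_irr //.
all: by rewrite ?r01 ?r02 ?r03 ?r12 ?r13 ?r23 // r_sym ?r01 ?r02 ?r03 ?r12 ?r13 ?r23.
Qed.

Lemma claw_iso6 v a b c :
  e v a -> e v b -> e v c -> a != b -> a != c -> b != c ->
  iso6 e graph_A \/ iso6 e graph_B \/ iso6 e graph_E.
Proof.
move=> va vb vc ab ac bc.
have [x [y [split_s s_spans]]] := claw_extension va vb vc ab ac bc.
have [ba ca cb] : [/\ b != a, c != a & c != b] by rewrite !(eq_sym b) !(eq_sym c).
have config := claw_config_nth_adj (x0 := v) (s := [:: v; a; b; c; x; y]) va vb vc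
  (claw_independent va vb vc ac bc) (claw_independent va vc vb ab cb)
  (claw_independent vb vc va ba ca).
apply: (claw_outcome_iso6 (x0 := v) (erefl : size [:: v; a; b; c; x; y] = 6) s_spans).
rewrite -config; apply: claw_configurations; first by rewrite size_map.
by rewrite config.
Qed.

Hypothesis max_deg2 : forall v a b c, e v a -> e v b -> e v c -> [|| a == b, a == c | b == c].

Lemma two_core_not_colourable (U : {set T}) :
  U != set0 -> (forall x, x \in U -> ~~ deg_le1_in e U x) ->
  ~ induced_full_Pn_colourable e n U.
Proof.
case/set0Pn=> x0 x0U U_core [f Hf].
have [m mU m_max] := arg_maxnP (fun x => nat_of_ord (f x)) x0U.
have [y [z [yU zU yz my mz]]] := deg_le1_inPn (U_core m mU).
have below t : t \in U -> e m t -> (f t).+1 = f m.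
  by move=> tU; have /= := m_max t tU; rewrite Hf // /path_adj => ? /orP[] /eqP; lia.
have fyz : f y = f z by apply: ord_inj; have := below y yU my; have := below z zU mz; lia.
have closed t s : t \in U -> s \notin U -> e t s = false.
  move=> tU sU; apply/negP => ts.
  have [y' [z' [y'U z'U yz' ty' tz']]] := deg_le1_inPn (U_core t tU).
  have /or3P[/eqP y'z'|/eqP y's|/eqP z's] := max_deg2 ty' tz' ts.
  - by rewrite y'z' eqxx in yz'.
  - by rewrite -y's y'U in sU.
  - by rewrite -z's z'U in sU.
have [t /negP] := twin_free yz; apply.
by have [tU|tU] := boolP (t \in U); [rewrite !Hf // fyz | rewrite !closed].
Qed.

Lemma low_vertex_or_setT (U : {set T}) :
  U != set0 -> (exists2 x, x \in U & deg_le1_in e U x) \/ U = [set: T].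
Proof.
move=> U0; case: (boolP [exists x in U, deg_le1_in e U x]).
  by case/existsP=> x /andP[xU x_low]; left; exists x.
move/existsPn=> no_low.
right; apply: not_colourable_setT; apply: two_core_not_colourable => // x xU.
by move: (no_low x); rewrite xU.
Qed.

Lemma max_deg2_cycle_or_linear_forest : is_cycle e \/ is_linear_forest e.
Proof.
have [all_low|] :=
  boolP [forall U : {set T}, (U != set0) ==> [exists x in U, deg_le1_in e U x]].
  right; have [|ls [f lf]] :=
    linear_forest_of_one_degenerate e_sym e_irr max_deg2 (S := [set: T]).
    by move=> U _ U0; move: (forallP all_low U); rewrite U0 => /existsP[x /andP[]]; exists x.
  exact: is_linear_forest_of lf.
case/forallPn=> U; rewrite negb_imply => /andP[U0 /existsPn no_low]; left.
have [[x xU x_low]|UT] := low_vertex_or_setT U0; first by move: (no_low x); rewrite xU x_low.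
have two_nbrs t : exists y z, [/\ y != z, e t y & e t z].
  have t_high : ~~ deg_le1_in e U t by move: (no_low t); rewrite UT inE.
  by have [y [z [_ _ yz ty tz]]] := deg_le1_inPn t_high; exists y, z.
have [w _] := set0Pn _ U0.
have [ls [f lf]] : exists ls f, linear_forest_on e [set~ w] ls f.
  apply: linear_forest_of_one_degenerate => // U' U'w U'0.
  have [//|U'T] := low_vertex_or_setT U'0.
  by have := subsetP U'w w; rewrite U'T inE !in_setC1 eqxx => /(_ isT).
exact: (is_cycle_of_path_and_vertex e_sym e_irr max_deg2 two_nbrs lf).
Qed.

End MinimalObstruction.

Lemma claw_or_max_deg2 (T : finType) (e : rel T) :
  (exists v a b c, [/\ e v a, e v b, e v c & [&& a != b, a != c & b != c]]) \/
  (forall v a b c, e v a -> e v b -> e v c -> [|| a == b, a == c | b == c]).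
Proof.
have [claw|no_claw] := boolP [exists v : T, exists a : T, exists b : T, exists c : T,
    [&& e v a, e v b, e v c & [&& a != b, a != c & b != c]]].
  case/existsP: claw => v /existsP[a /existsP[b /existsP[c /and4P[va vb vc distinct]]]].
  by left; exists v, a, b, c.
right=> v a b c va vb vc; apply: contraTT no_claw; rewrite !negb_or negbK => distinct.
apply/existsP; exists v; apply/existsP; exists a; apply/existsP; exists b; apply/existsP; exists c.
by rewrite va vb vc.
Qed.

Theorem lemma2p2 (n : nat) (T : finType) (e : rel T) :
  0 < n -> simple_graph e -> @minimal_Pn_obstruction T e n ->
  is_cycle e \/ is_linear_forest e \/
  iso6 e graph_A \/ iso6 e graph_B \/ iso6 e graph_E.
Proof.
move=> _ [e_sym e_irr] [not_colourable proper_colourable].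
have [[v [a [b [c [va vb vc /and3P[ab ac bc]]]]]]|max_deg2] := claw_or_max_deg2 e.
  by right; right; apply: (claw_iso6 e_sym e_irr not_colourable proper_colourable va vb vc).
by case: (max_deg2_cycle_or_linear_forest e_sym e_irr not_colourable proper_colourable max_deg2);
  auto.
Qed.
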